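(* Let $(q(t),p(t))$ be an orbit of $X_H$ in rotating coordinates. If $(q_1+\mu)p_2-q_2p_1>\mu(q_1+\mu)$ along the orbit, then the curve $q(t)$ is retrograde with respect to $e(t)$. If $(q_1+\mu)p_2-q_2p_1<\mu(q_1+\mu)$ along the orbit, then it is direct.
   Context: For $\mu\in[0,1]$, $H(q,p)=\tfrac12|p|^2+q_1p_2-q_2p_1-\frac{1-\mu}{|q+(\mu,0)|}-\frac{\mu}{|q-(1-\mu,0)|}$ on $(\mathbb{R}^2\setminus\{(-\mu,0),(1-\mu,0)\})\times\mathbb{R}^2$, with $\dot q=\partial H/\partial p$, $\dot p=-\partial H/\partial q$. Let $R_t=\begin{pmatrix}\cos t&-\sin t\\ \sin t&\cos t\end{pmatrix}$. Sidereal coordinates are $\bar q(t)=R_{-t}q(t)$, and $\bar e(t)=R_{-t}(-\mu,0)$ (with $e(t)$ the corresponding point $(-\mu,0)$ in rotating coordinates). A path is called retrograde with respect to $e(t)$ if the angle $\phi(t)=\arg\big(\bar q_1(t)-\bar e_1(t)+i(\bar q_2(t)-\bar e_2(t))\big)$ is increasing, and prograde (direct) if it is decreasing. *)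

From Stdlib Require Import Reals Lra.
From Coquelicot Require Import Coquelicot.
Open Scope R_scope.

(* The Hamiltonian of the rotating Kepler / restricted three-body problem,
   H(q,p) = |p|^2/2 + q1 p2 - q2 p1 - (1-mu)/|q+(mu,0)| - mu/|q-(1-mu,0)|. *)
Definition H (mu q1 q2 p1 p2 : R) : R :=
  (p1 ^ 2 + p2 ^ 2) / 2 + q1 * p2 - q2 * p1
  - (1 - mu) / sqrt ((q1 + mu) ^ 2 + q2 ^ 2)
  - mu / sqrt ((q1 - (1 - mu)) ^ 2 + q2 ^ 2).

Definition in_I (a b : Rbar) (t : R) : Prop := Rbar_lt a t /\ Rbar_lt t b.

(* (q1,q2,p1,p2) : I -> R^4 is an orbit of X_H, i.e.
   qdot = dH/dp, pdot = -dH/dq, and q avoids the two collision points. *)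
Definition is_orbit (mu : R) (a b : Rbar) (q1 q2 p1 p2 : R -> R) : Prop :=
  forall t, in_I a b t ->
    (q1 t, q2 t) <> (- mu, 0) /\ (q1 t, q2 t) <> (1 - mu, 0) /\
    (exists v, is_derive q1 t v /\
       is_derive (fun x => H mu (q1 t) (q2 t) x (p2 t)) (p1 t) v) /\
    (exists v, is_derive q2 t v /\
       is_derive (fun x => H mu (q1 t) (q2 t) (p1 t) x) (p2 t) v) /\
    (exists v, is_derive p1 t (- v) /\
       is_derive (fun x => H mu x (q2 t) (p1 t) (p2 t)) (q1 t) v) /\
    (exists v, is_derive p2 t (- v) /\
       is_derive (fun x => H mu (q1 t) x (p1 t) (p2 t)) (q2 t) v).

Definition rot (t : R) (x : R * R) : R * R :=
  (cos t * fst x - sin t * snd x, sin t * fst x + cos t * snd x).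

Definition qbar (q1 q2 : R -> R) (t : R) : R * R := rot (- t) (q1 t, q2 t).
Definition ebar (mu t : R) : R * R := rot (- t) (- mu, 0).

Definition is_angle_lift (mu : R) (a b : Rbar) (q1 q2 : R -> R) (phi : R -> R)
  : Prop :=
  forall t, in_I a b t ->
    continuous phi t /\
    let d1 := fst (qbar q1 q2 t) - fst (ebar mu t) in
    let d2 := snd (qbar q1 q2 t) - snd (ebar mu t) in
    d1 = sqrt (d1 ^ 2 + d2 ^ 2) * cos (phi t) /\
    d2 = sqrt (d1 ^ 2 + d2 ^ 2) * sin (phi t).

Definition retrograde (mu : R) (a b : Rbar) (q1 q2 : R -> R) : Prop :=
  exists phi, is_angle_lift mu a b q1 q2 phi /\
    forall s t, in_I a b s -> in_I a b t -> s < t -> phi s < phi t.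

Definition prograde (mu : R) (a b : Rbar) (q1 q2 : R -> R) : Prop :=
  exists phi, is_angle_lift mu a b q1 q2 phi /\
    forall s t, in_I a b s -> in_I a b t -> s < t -> phi t < phi s.

From Stdlib Require Import Reals Lra.
From Coquelicot Require Import Coquelicot.
Open Scope R_scope.

(* Write q + (mu, 0) = r (cos th, sin th).  Since qbar - ebar = R_{-t} (q + (mu, 0)),
   the sidereal angle is phi = th - t.  Hamilton's equations give
   qdot = (p1 - q2, p2 + q1), hence
     phidot = ((q1 + mu) q2dot - q2 q1dot) / r^2 - 1
            = ((q1 + mu) p2 - q2 p1 - mu (q1 + mu)) / r^2,
   whose sign is the assumed one.  A differentiable choice of th is obtained by
   integrating the angular velocity from a polar angle at one instant: rotating
   the unit vector (q + (mu, 0)) / r by -th then gives a curve with zero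
   derivative, so th remains a polar angle. *)

Lemma in_I_between a b s t u :
  in_I a b s -> in_I a b t -> Rmin s t <= u <= Rmax s t -> in_I a b u.
Proof.
  unfold in_I, Rmin, Rmax; destruct (Rle_dec s t);
    destruct a, b; simpl; intuition lra.
Qed.

Lemma in_I_nonempty a b : Rbar_lt a b -> exists t, in_I a b t.
Proof.
  unfold in_I; destruct a as [a| |], b as [b| |]; simpl; try tauto; intros Hab.
  - exists ((a + b) / 2); simpl; lra.
  - exists (a + 1); simpl; lra.
  - exists (b - 1); simpl; lra.
  - exists 0; simpl; tauto.
Qed.

Lemma in_I_locally a b t : in_I a b t -> locally t (in_I a b).
Proof. exact (open_and _ _ (open_Rbar_gt a) (open_Rbar_lt b) t). Qed.

Lemma is_derive_continuity_pt f t v : is_derive f t v -> continuity_pt f t.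
Proof.
  intros Hf. apply continuity_pt_filterlim, (ex_derive_continuous (V := R_NormedModule)).
  now exists v.
Qed.

Lemma strictly_increasing_on_I a b f df :
  (forall t, in_I a b t -> is_derive f t (df t) /\ 0 < df t) ->
  forall s t, in_I a b s -> in_I a b t -> s < t -> f s < f t.
Proof.
  intros Hf s t [Has _] [_ Htb] Hst.
  apply (incr_function f a b df); auto; intros u Hau Hub; apply Hf; split; auto.
Qed.

Lemma strictly_decreasing_on_I a b f df :
  (forall t, in_I a b t -> is_derive f t (df t) /\ df t < 0) ->
  forall s t, in_I a b s -> in_I a b t -> s < t -> f t < f s.
Proof.
  intros Hf s t Hs Ht Hst.
  enough (- f s < - f t) by lra.
  apply (strictly_increasing_on_I a b (fun u => - f u) (fun u => - df u)); auto.
  intros u Hu; destruct (Hf u Hu) as [Hd Hneg]; split; [exact (is_derive_opp _ _ _ Hd) | lra].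
Qed.

Lemma constant_on_I a b f :
  (forall t, in_I a b t -> is_derive f t 0) ->
  forall s t, in_I a b s -> in_I a b t -> f s = f t.
Proof.
  intros Hf.
  assert (Hlt : forall s t, in_I a b s -> in_I a b t -> s < t -> f s = f t).
  { intros s t Hs Ht Hst. apply eq_is_derive; [|exact Hst].
    intros u Hu. apply Hf, (in_I_between a b s t); auto.
    rewrite Rmin_left, Rmax_right; lra. }
  intros s t Hs Ht.
  destruct (Rtotal_order s t) as [Hst|[<-|Hts]]; auto.
  symmetry; auto.
Qed.

Lemma primitive_on_I a b w t0 c :
  in_I a b t0 -> (forall t, in_I a b t -> continuity_pt w t) ->
  exists F, F t0 = c /\ forall t, in_I a b t -> is_derive F t (w t).
Proof.
  intros Ht0 Hw. exists (fun t => c + RInt w t0 t). split.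
  - rewrite RInt_point. apply Rplus_0_r.
  - intros t Ht.
    assert (Hint : is_derive (fun s => RInt w t0 s) t (w t)).
    { apply (is_derive_RInt _ _ t0).
      - apply (filter_imp (in_I a b)); [|now apply in_I_locally].
        intros s Hs. apply (RInt_correct (V := R_CompleteNormedModule)).
        apply ex_RInt_continuous. intros u Hu.
        apply continuity_pt_filterlim, Hw, (in_I_between a b t0 s); auto.
      - now apply continuity_pt_filterlim, Hw. }
    replace (w t) with (0 + w t) by ring.
    exact (is_derive_plus (fun _ => c) _ t 0 (w t) (is_derive_const c t) Hint).
Qed.

Lemma unit_circle_angle u v : u ^ 2 + v ^ 2 = 1 -> exists th, u = cos th /\ v = sin th.
Proof.
  intros Huv. assert (Hu : -1 <= u <= 1) by nra.
  assert (Hsin : sin (acos u) = Rabs v).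
  { rewrite sin_acos by exact Hu.
    replace (1 - u²) with (v²) by (unfold Rsqr; lra).
    apply sqrt_Rsqr_abs. }
  destruct (Rle_or_lt 0 v) as [Hv|Hv].
  - exists (acos u). rewrite cos_acos, Hsin, Rabs_right by lra. auto.
  - exists (- acos u). rewrite cos_neg, sin_neg, cos_acos, Hsin, Rabs_left by lra.
    split; lra.
Qed.

Lemma polar_coordinates x y : 0 < x ^ 2 + y ^ 2 ->
  exists th, x = sqrt (x ^ 2 + y ^ 2) * cos th /\ y = sqrt (x ^ 2 + y ^ 2) * sin th.
Proof.
  intros Hr.
  assert (Hsq := sqrt_sqrt _ (Rlt_le _ _ Hr)).
  assert (Hpos := sqrt_lt_R0 _ Hr).
  set (r := sqrt (x ^ 2 + y ^ 2)) in *.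
  destruct (unit_circle_angle (x / r) (y / r)) as [th [Hc Hs]].
  { replace ((x / r) ^ 2 + (y / r) ^ 2) with ((x ^ 2 + y ^ 2) / (r * r)) by (field; lra).
    rewrite Hsq. field. lra. }
  exists th. rewrite <- Hc, <- Hs. split; field; lra.
Qed.

Lemma polar_iff_rotated x y r th : 0 < r ->
  x = r * cos th /\ y = r * sin th <->
  (cos th * x + sin th * y) / r = 1 /\ (cos th * y - sin th * x) / r = 0.
Proof.
  intros Hr. pose proof (sin2_cos2 th) as Hpyth. unfold Rsqr in Hpyth.
  split.
  - intros [-> ->]. split; [|field; lra].
    replace (cos th * (r * cos th) + sin th * (r * sin th))
      with (r * (sin th * sin th + cos th * cos th)) by ring.
    rewrite Hpyth. field. lra.
  - intros [Hc Hs].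
    assert (Hc' : cos th * x + sin th * y = r).
    { replace (cos th * x + sin th * y) with ((cos th * x + sin th * y) / r * r) by (field; lra).
      rewrite Hc. ring. }
    assert (Hs' : cos th * y - sin th * x = 0).
    { replace (cos th * y - sin th * x) with ((cos th * y - sin th * x) / r * r) by (field; lra).
      rewrite Hs. ring. }
    split.
    + transitivity (cos th * (cos th * x + sin th * y) - sin th * (cos th * y - sin th * x));
        [| rewrite Hc', Hs'; ring].
      transitivity (x * (sin th * sin th + cos th * cos th)); [rewrite Hpyth; ring | ring].
    + transitivity (sin th * (cos th * x + sin th * y) + cos th * (cos th * y - sin th * x));
        [| rewrite Hc', Hs'; ring].
      transitivity (y * (sin th * sin th + cos th * cos th)); [rewrite Hpyth; ring | ring].
Qed.

Lemma rotated_unit_vector_derive_zero (x y th : R -> R) X Y t :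
  is_derive x t X -> is_derive y t Y ->
  is_derive th t ((x t * Y - y t * X) / (x t ^ 2 + y t ^ 2)) ->
  0 < x t ^ 2 + y t ^ 2 ->
  is_derive (fun s => (cos (th s) * x s + sin (th s) * y s) / sqrt (x s ^ 2 + y s ^ 2)) t 0 /\
  is_derive (fun s => (cos (th s) * y s - sin (th s) * x s) / sqrt (x s ^ 2 + y s ^ 2)) t 0.
Proof.
  intros Hx Hy Hth Hr.
  assert (DX : Derive (fun s => x s) t = X) by now apply is_derive_unique.
  assert (DY : Derive (fun s => y s) t = Y) by now apply is_derive_unique.
  assert (DT : Derive (fun s => th s) t = (x t * Y - y t * X) / (x t ^ 2 + y t ^ 2))
    by now apply is_derive_unique.
  assert (Hsq := sqrt_sqrt _ (Rlt_le _ _ Hr)).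
  assert (Hpos := sqrt_lt_R0 _ Hr).
  split; auto_derive; rewrite ?DX, ?DY, ?DT;
    replace (x t * (x t * 1) + y t * (y t * 1)) with (x t ^ 2 + y t ^ 2) by ring.
  all: try solve [repeat split; (eexists; eassumption) || lra].
  all: set (r := sqrt (x t ^ 2 + y t ^ 2)) in *; rewrite Hsq; field; lra.
Qed.

Lemma differentiable_polar_angle a b (x y X Y : R -> R) :
  Rbar_lt a b ->
  (forall t, in_I a b t ->
     is_derive x t (X t) /\ is_derive y t (Y t) /\
     continuity_pt X t /\ continuity_pt Y t /\ 0 < x t ^ 2 + y t ^ 2) ->
  exists th, forall t, in_I a b t ->
    is_derive th t ((x t * Y t - y t * X t) / (x t ^ 2 + y t ^ 2)) /\
    x t = sqrt (x t ^ 2 + y t ^ 2) * cos (th t) /\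
    y t = sqrt (x t ^ 2 + y t ^ 2) * sin (th t).
Proof.
  intros Hab Hxy.
  destruct (in_I_nonempty a b Hab) as [t0 Ht0].
  destruct (Hxy t0 Ht0) as (_ & _ & _ & _ & Hr0).
  destruct (polar_coordinates _ _ Hr0) as [th0 Hpolar0].
  destruct (primitive_on_I a b (fun t => (x t * Y t - y t * X t) / (x t ^ 2 + y t ^ 2)) t0 th0)
    as [th [Hth0 Hth]]; [exact Ht0| |].
  { intros t Ht. destruct (Hxy t Ht) as (Hx & Hy & HX & HY & Hr).
    apply is_derive_continuity_pt in Hx, Hy.
    apply continuity_pt_div; [| |lra].
    - apply continuity_pt_minus; apply continuity_pt_mult; auto.
    - apply continuity_pt_plus; repeat apply continuity_pt_mult; auto;
        apply continuity_pt_const; intros ? ?; reflexivity. }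
  exists th. intros t Ht. split; [now apply Hth|].
  assert (Hr : forall s, in_I a b s -> 0 < sqrt (x s ^ 2 + y s ^ 2)).
  { intros s Hs. apply sqrt_lt_R0, Hxy, Hs. }
  set (g1 s := (cos (th s) * x s + sin (th s) * y s) / sqrt (x s ^ 2 + y s ^ 2)).
  set (g2 s := (cos (th s) * y s - sin (th s) * x s) / sqrt (x s ^ 2 + y s ^ 2)).
  assert (Hg : forall s, in_I a b s -> g1 s = g1 t0 /\ g2 s = g2 t0).
  { intros s Hs. split; apply (constant_on_I a b); auto; intros u Hu;
      destruct (Hxy u Hu) as (Hx & Hy & _ & _ & Hru);
      apply (rotated_unit_vector_derive_zero x y th _ _ u Hx Hy (Hth u Hu) Hru). }
  rewrite <- Hth0 in Hpolar0.
  apply (polar_iff_rotated _ _ _ _ (Hr t0 Ht0)) in Hpolar0.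
  apply (polar_iff_rotated _ _ _ _ (Hr t Ht)).
  change (g1 t = 1 /\ g2 t = 0). destruct (Hg t Ht) as [-> ->]. exact Hpolar0.
Qed.

Lemma H_derive_p1 mu q1 q2 p1 p2 : is_derive (fun x => H mu q1 q2 x p2) p1 (p1 - q2).
Proof. unfold H. auto_derive; [exact I | field]. Qed.

Lemma H_derive_p2 mu q1 q2 p1 p2 : is_derive (fun x => H mu q1 q2 p1 x) p2 (p2 + q1).
Proof. unfold H. auto_derive; [exact I | field]. Qed.

Section Orbit.

Context {mu : R} {a b : Rbar} {q1 q2 p1 p2 : R -> R}.
Hypothesis Horb : is_orbit mu a b q1 q2 p1 p2.

Lemma orbit_velocity t : in_I a b t ->
  is_derive q1 t (p1 t - q2 t) /\ is_derive q2 t (p2 t + q1 t).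
Proof.
  intros Ht. destruct (Horb t Ht) as (_ & _ & [v1 [D1 E1]] & [v2 [D2 E2]] & _).
  replace (p1 t - q2 t) with v1
    by (rewrite <- (is_derive_unique _ _ _ E1); apply is_derive_unique, H_derive_p1).
  replace (p2 t + q1 t) with v2
    by (rewrite <- (is_derive_unique _ _ _ E2); apply is_derive_unique, H_derive_p2).
  now split.
Qed.

Lemma orbit_momenta_continuous t : in_I a b t -> continuity_pt p1 t /\ continuity_pt p2 t.
Proof.
  intros Ht. destruct (Horb t Ht) as (_ & _ & _ & _ & [v1 [D1 _]] & [v2 [D2 _]]).
  split; eapply is_derive_continuity_pt; eassumption.
Qed.

Lemma orbit_avoids_e t : in_I a b t -> 0 < (q1 t + mu) ^ 2 + q2 t ^ 2.
Proof.
  intros Ht. destruct (Horb t Ht) as [Hne _].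
  apply Rnot_le_lt; intros Hle. apply Hne.
  assert (q1 t + mu = 0) by nra. assert (q2 t = 0) by nra.
  f_equal; lra.
Qed.

End Orbit.

Lemma sidereal_offset mu q1 q2 t :
  (fst (qbar q1 q2 t) - fst (ebar mu t), snd (qbar q1 q2 t) - snd (ebar mu t)) =
  rot (- t) (q1 t + mu, q2 t).
Proof. unfold qbar, ebar, rot; simpl; f_equal; ring. Qed.

Lemma rot_polar s r th : rot s (r * cos th, r * sin th) = (r * cos (th + s), r * sin (th + s)).
Proof. unfold rot; simpl; rewrite cos_plus, sin_plus; f_equal; ring. Qed.

Lemma polar_norm r th : 0 <= r -> sqrt ((r * cos th) ^ 2 + (r * sin th) ^ 2) = r.
Proof.
  intros Hr. pose proof (sin2_cos2 th) as Hpyth. unfold Rsqr in Hpyth.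
  replace ((r * cos th) ^ 2 + (r * sin th) ^ 2)
    with (r ^ 2 * (sin th * sin th + cos th * cos th)) by ring.
  rewrite Hpyth, Rmult_1_r. now apply sqrt_pow2.
Qed.

Lemma is_angle_lift_of_polar mu a b q1 q2 phi :
  (forall t, in_I a b t -> continuous phi t /\
     exists r, 0 <= r /\
       (fst (qbar q1 q2 t) - fst (ebar mu t), snd (qbar q1 q2 t) - snd (ebar mu t)) =
       (r * cos (phi t), r * sin (phi t))) ->
  is_angle_lift mu a b q1 q2 phi.
Proof.
  intros Hpolar t Ht. destruct (Hpolar t Ht) as [Hc [r [Hr E]]].
  split; [exact Hc|]. cbv zeta. revert E.
  generalize (fst (qbar q1 q2 t) - fst (ebar mu t)) (snd (qbar q1 q2 t) - snd (ebar mu t)).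
  intros d1 d2 E. injection E as -> ->.
  rewrite polar_norm by exact Hr. now split.
Qed.

Definition sidereal_angular_velocity (mu : R) (q1 q2 p1 p2 : R -> R) (t : R) : R :=
  ((q1 t + mu) * p2 t - q2 t * p1 t - mu * (q1 t + mu)) / ((q1 t + mu) ^ 2 + q2 t ^ 2).

Lemma sidereal_angle mu a b q1 q2 p1 p2 :
  Rbar_lt a b -> is_orbit mu a b q1 q2 p1 p2 ->
  exists phi, is_angle_lift mu a b q1 q2 phi /\
    forall t, in_I a b t -> is_derive phi t (sidereal_angular_velocity mu q1 q2 p1 p2 t).
Proof.
  intros Hab Horb.
  destruct (differentiable_polar_angle a b (fun s => q1 s + mu) q2
              (fun s => p1 s - q2 s) (fun s => p2 s + q1 s) Hab) as [th Hth].
  { intros t Ht.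
    destruct (orbit_velocity Horb t Ht) as [Dq1 Dq2].
    destruct (orbit_momenta_continuous Horb t Ht) as [Cp1 Cp2].
    split; [|split; [|split; [|split]]].
    - replace (p1 t - q2 t) with (p1 t - q2 t + 0) by ring.
      exact (is_derive_plus q1 (fun _ => mu) t _ 0 Dq1 (is_derive_const mu t)).
    - exact Dq2.
    - apply continuity_pt_minus; [exact Cp1 | exact (is_derive_continuity_pt _ _ _ Dq2)].
    - apply continuity_pt_plus; [exact Cp2 | exact (is_derive_continuity_pt _ _ _ Dq1)].
    - exact (orbit_avoids_e Horb t Ht). }
  set (phi t := th t - t).
  assert (Hphi : forall t, in_I a b t ->
            is_derive phi t (sidereal_angular_velocity mu q1 q2 p1 p2 t)).
  { intros t Ht. destruct (Hth t Ht) as [Dth _].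
    pose proof (orbit_avoids_e Horb t Ht) as Hr.
    replace (sidereal_angular_velocity mu q1 q2 p1 p2 t)
      with (((q1 t + mu) * (p2 t + q1 t) - q2 t * (p1 t - q2 t))
              / ((q1 t + mu) ^ 2 + q2 t ^ 2) - 1)
      by (unfold sidereal_angular_velocity; field; lra).
    exact (is_derive_minus th (fun s => s) t _ 1 Dth (is_derive_id t)). }
  exists phi. split; [|exact Hphi].
  apply is_angle_lift_of_polar. intros t Ht. split.
  - apply (ex_derive_continuous (V := R_NormedModule)). eexists. now apply Hphi.
  - destruct (Hth t Ht) as (_ & Hx & Hy).
    exists (sqrt ((q1 t + mu) ^ 2 + q2 t ^ 2)). split; [apply sqrt_pos|].
    rewrite sidereal_offset.
    set (r := sqrt ((q1 t + mu) ^ 2 + q2 t ^ 2)) in *.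
    replace (q1 t + mu, q2 t) with (r * cos (th t), r * sin (th t)) by (f_equal; symmetry; assumption).
    rewrite rot_polar. reflexivity.
Qed.

Theorem proposition2p1 (mu : R) (a b : Rbar) (q1 q2 p1 p2 : R -> R) :
  0 <= mu <= 1 ->
  Rbar_lt a b ->
  is_orbit mu a b q1 q2 p1 p2 ->
  ((forall t, in_I a b t ->
      (q1 t + mu) * p2 t - q2 t * p1 t > mu * (q1 t + mu)) ->
    retrograde mu a b q1 q2) /\
  ((forall t, in_I a b t ->
      (q1 t + mu) * p2 t - q2 t * p1 t < mu * (q1 t + mu)) ->
    prograde mu a b q1 q2).
Proof.
  intros _ Hab Horb.
  destruct (sidereal_angle mu a b q1 q2 p1 p2 Hab Horb) as [phi [Hlift Hphi]].
  pose proof (orbit_avoids_e Horb) as Hr.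
  split; intros Hsign; exists phi; split; try exact Hlift.
  - apply (strictly_increasing_on_I a b phi (sidereal_angular_velocity mu q1 q2 p1 p2)).
    intros t Ht. split; [now apply Hphi|].
    apply Rdiv_lt_0_compat; [specialize (Hsign t Ht); lra | now apply Hr].
  - apply (strictly_decreasing_on_I a b phi (sidereal_angular_velocity mu q1 q2 p1 p2)).
    intros t Ht. split; [now apply Hphi|].
    apply Rdiv_neg_pos; [specialize (Hsign t Ht); lra | now apply Hr].
Qed.
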